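(* Let $q>0$. If $L(q)$ contains a loop of odd length, then $1/q$ is an algebraic integer.
   Context: Let $q>0$. For an integer $k\ge0$ and $\mathbf m=(m_0,\dots,m_k)\in\mathbb Z^{k+1}$ put $\mathbf m_j=(m_0,\dots,m_j)$. Define $c(q,\mathbf m_0)=m_0$ and recursively $c(q,\mathbf m_j)=m_j+\frac{1}{q\,c(q,\mathbf m_{j-1})}$ for $1\le j\le k$. The vector $\mathbf m$ is a path for $q$ of length $k$ if $c(q,\mathbf m_j)\ne0$ for $0\le j\le k-1$. A loop is a path $\mathbf m$ with $c(q,\mathbf m)=0$, and $L(q)$ denotes the set of loops for $q$. *)

From mathcomp Require Import all_boot all_order all_algebra.
From mathcomp Require Import reals.
Set Implicit Arguments. Unset Strict Implicit. Unset Printing Implicit Defensive.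
Import Order.TTheory GRing.Theory Num.Theory.
Local Open Scope ring_scope.

(* A vector m = (m_0,...,m_k) in Z^(k+1) is represented by a function
   m : nat -> int (only the values m 0, ..., m k matter).
   cf q m j = c(q, m_j):  c(q,m_0) = m_0,
   c(q,m_j) = m_j + 1/(q c(q,m_{j-1})). *)
Fixpoint cf (R : realType) (q : R) (m : nat -> int) (j : nat) : R :=
  match j with
  | 0 => (m 0%N)%:~R
  | j'.+1 => (m j)%:~R + (q * cf q m j')^-1
  end.

Definition is_path (R : realType) (q : R) (k : nat) (m : nat -> int) : Prop :=
  forall j : nat, (j < k)%N -> cf q m j != 0.

(* m is a loop for q of length k, i.e. (k, m) represents an element of L(q) *)
Definition is_loop (R : realType) (q : R) (k : nat) (m : nat -> int) : Prop :=
  is_path q k m /\ cf q m k = 0.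

Definition algebraic_integer (R : realType) (x : R) : Prop :=
  integralOver (fun z : int => z%:~R : R) x.

From mathcomp Require Import all_boot all_order all_algebra.
From mathcomp Require Import reals.
Set Implicit Arguments. Unset Strict Implicit. Unset Printing Implicit Defensive.
Local Open Scope ring_scope.
Import Order.TTheory GRing.Theory Num.Theory.

(* The continuants P_n of m (P_0 = 1, P_1 = m_0,
   P_(n+2) = m_(n+1) P_(n+1) + X P_n) satisfy
   P_(j+1)(1/q) = c(q, m_0) ... c(q, m_j) along a path, so a loop of length k
   makes 1/q a root of the integer polynomial P_(k+1).  In P_(2n) only the
   term X P_(2n-2) reaches degree n, so P_(2n) is monic; for k odd this is a
   monic equation for 1/q. *)

Fixpoint continuant (m : nat -> int) (n : nat) : {poly int} :=
  match n with
  | 0 => 1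
  | 1 => (m 0%N)%:P
  | (n'.+1 as n1).+1 => (m n1)%:P * continuant m n1 + 'X * continuant m n'
  end.

Section ContinuantDegree.
Variable m : nat -> int.

Lemma size_continuant_le n : (size (continuant m n) <= n./2.+1)%N.
Proof.
suff: (size (continuant m n) <= n./2.+1)%N &&
      (size (continuant m n.+1) <= n.+1./2.+1)%N by case/andP.
elim: n => [|n /andP[leP0 leP1]].
  by rewrite /= size_poly1 size_polyC leq_b1.
rewrite leP1 /=; apply: leq_trans (size_polyD _ _) _; rewrite geq_max.
apply/andP; split.
  rewrite mul_polyC (leq_trans (size_scale_leq _ _)) // (leq_trans leP1) //.
  by rewrite /= uphalf_half; case: (odd n); rewrite ?add0n ?add1n ltnS // leqnSn.
apply: leq_trans (size_polyMleq _ _) _.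
by rewrite size_polyX.
Qed.

Lemma coef_continuant_double n : (continuant m n.*2)`_n = 1.
Proof.
elim: n => [|n IHn]; first by rewrite coef1.
have size_odd : (size (continuant m n.*2.+1) <= n.+1)%N.
  by rewrite (leq_trans (size_continuant_le _)) //= uphalf_double.
rewrite doubleS /= coefD coefCM coefXM IHn.
by rewrite nth_default ?mulr0 ?add0r.
Qed.

Lemma monic_continuant_double n : continuant m n.*2 \is monic.
Proof.
have size_even : size (continuant m n.*2) = n.+1.
  apply/anti_leq; rewrite (leq_trans (size_continuant_le _)) ?doubleK //=.
  rewrite ltnNge; apply: contraL (oner_neq0 int) => /(nth_default 0).
  by rewrite coef_continuant_double => ->.
by rewrite monicE lead_coefE size_even coef_continuant_double.
Qed.

End ContinuantDegree.

Section ContinuantHorner.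
Variables (R : comNzRingType) (x : R) (m : nat -> int).
Local Notation P n := (map_poly (fun z : int => z%:~R : R) (continuant m n)).[x].

Lemma horner_continuant0 : P 0 = 1.
Proof. by rewrite rmorph1 hornerC. Qed.

Lemma horner_continuant1 : P 1 = (m 0%N)%:~R.
Proof. by rewrite map_polyC hornerC. Qed.

Lemma horner_continuantSS n : P n.+2 = (m n.+1)%:~R * P n.+1 + x * P n.
Proof.
rewrite [continuant m n.+2]/= rmorphD !rmorphM /= map_polyC map_polyX.
by rewrite hornerD !hornerM hornerC hornerX [x * _]mulrC.
Qed.

End ContinuantHorner.

Section ContinuantPath.
Variables (R : realType) (q : R) (m : nat -> int) (k : nat).
Hypothesis path_m : is_path q k m.
Local Notation P n := (map_poly (fun z : int => z%:~R : R) (continuant m n)).[q^-1].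

Lemma horner_continuant_prod_cf j : (j <= k.+1)%N -> P j = \prod_(i < j) cf q m i.
Proof.
suff Pprod : forall i, (i <= k)%N ->
    P i = \prod_(l < i) cf q m l /\ P i.+1 = \prod_(l < i.+1) cf q m l.
  case: j => [_|j]; first by case: (Pprod 0%N (leq0n k)).
  by rewrite ltnS => /Pprod[].
elim=> [|i IHi] lt_ik.
  by rewrite horner_continuant0 horner_continuant1 big_ord0 big_ord1.
have [Pi Pi1] := IHi (ltnW lt_ik); split=> //.
have cf_i_neq0 : cf q m i != 0 by apply: path_m.
rewrite horner_continuantSS Pi Pi1 !big_ord_recr /= mulrDr mulrC; congr (_ + _).
by rewrite invfM mulrCA mulfK.
Qed.

End ContinuantPath.

Lemma root_continuant_loop (R : realType) (q : R) (k : nat) (m : nat -> int) :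
  is_loop q k m ->
  root (map_poly (fun z : int => z%:~R : R) (continuant m k.+1)) q^-1.
Proof.
case=> path_m cf_k_eq0.
by rewrite /root (horner_continuant_prod_cf path_m) // big_ord_recr /= cf_k_eq0 mulr0.
Qed.

Theorem corollary2 (R : realType) (q : R) (hq : 0 < q) :
  (exists (k : nat) (m : nat -> int), odd k /\ is_loop q k m) ->
  algebraic_integer q^-1.
Proof.
move=> [k [m [odd_k loop_m]]].
have even_k1 : k.+1 = (k.+1)./2.*2 by rewrite -[LHS]odd_double_half /= odd_k.
exists (continuant m (k.+1)./2.*2); first exact: monic_continuant_double.
rewrite -even_k1; exact: root_continuant_loop loop_m.
Qed.
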